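(* Let $a=\{a_1,\dots,a_m\}\subseteq\mathbb{Z}_{\ge 2}$ and $n\ge 0$. Then $\chi_{\mathcal{A}_n(a)}(t)=\chi_{\widetilde{\mathcal{C}}_n}(t-1)$.
   Context: For a set $a=\{a_1,\dots,a_m\}$ of integers $\ge2$ and $n\ge 1$, $\mathcal{A}_n(a)$ denotes the hyperplane arrangement in $\mathbb{R}^n$ consisting of the hyperplanes $x_i=0$ ($1\le i\le n$), $x_i=x_j$ ($1\le i<j\le n$), and $x_i=a_rx_j$ ($1\le i\neq j\le n$, $1\le r\le m$). $\widetilde{\mathcal{C}}_n$ denotes the arrangement in $\mathbb{R}^n$ consisting of the hyperplanes $x_i-x_j=0$ ($1\le i<j\le n$) and $x_i-x_j=\log a_r/\log a_1$ ($1\le i\neq j\le n$, $1\le r\le m$; for $r=1$ this is $x_i-x_j=1$). For $n=0$ both are empty arrangements in $\mathbb{R}^0$ with characteristic polynomial $1$. For a finite arrangement $\mathcal{A}$ of affine hyperplanes in $\mathbb{R}^n$, the characteristic polynomial is $\chi_{\mathcal{A}}(t)=\sum_{\mathcal{B}}(-1)^{\#\mathcal{B}}t^{n-\operatorname{rank}(\mathcal{B})}$, the sum over subsets $\mathcal{B}\subseteq\mathcal{A}$ whose hyperplanes have nonempty common intersection, where $\operatorname{rank}(\mathcal{B})$ is the dimension of the span of the normal vectors of the hyperplanes in $\mathcal{B}$. *)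

From Stdlib Require Import Reals List Arith ClassicalEpsilon.
Import ListNotations.
Open Scope R_scope.

(* Vectors / points of R^n: functions nat -> R; only coordinates 0..n-1 matter. *)
Definition vec := nat -> R.

Fixpoint sumn_R (n : nat) (f : nat -> R) : R :=
  match n with O => 0 | S k => sumn_R k f + f k end.

Record hyperplane := mkH { nrm : vec ; cst : R }.

Definition on_hyp (n : nat) (h : hyperplane) (x : vec) : Prop :=
  sumn_R n (fun i => nrm h i * x i) = cst h.

(* An arrangement is a (duplicate-free) list of hyperplanes. *)
Definition arrangement := list hyperplane.

(* All sublists (= all subsets, for a duplicate-free list). *)
Fixpoint subsets {A : Type} (l : list A) : list (list A) :=
  match l with
  | [] => [[]]
  | x :: l' => let s := subsets l' in map (cons x) s ++ s
  end.

Definition lin_indep (n : nat) (vs : list vec) : Prop :=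
  forall c : nat -> R,
    (forall i, (i < n)%nat ->
       fold_right Rplus 0 (map (fun k => c k * nth k vs (fun _ => 0) i)
                               (seq 0 (length vs))) = 0) ->
    forall k, (k < length vs)%nat -> c k = 0.

Definition lin_indep_b (n : nat) (vs : list vec) : bool :=
  if excluded_middle_informative (lin_indep n vs) then true else false.

Definition rank_vecs (n : nat) (vs : list vec) : nat :=
  list_max (map (@length vec) (filter (lin_indep_b n) (subsets vs))).

Definition rank_hyps (n : nat) (B : arrangement) : nat := rank_vecs n (map nrm B).

Definition central_in (n : nat) (B : arrangement) : Prop :=
  exists x : vec, forall h, In h B -> on_hyp n h x.

Definition central_b (n : nat) (B : arrangement) : bool :=
  if excluded_middle_informative (central_in n B) then true else false.

Definition charpoly (n : nat) (A : arrangement) (t : R) : R :=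
  fold_right Rplus 0
    (map (fun B => (-1) ^ length B * t ^ (n - rank_hyps n B))
         (filter (central_b n) (subsets A))).

Definition e (i : nat) : vec := fun k => if Nat.eqb k i then 1 else 0.

Definition vlin (a : R) (u : vec) (b : R) (w : vec) : vec :=
  fun k => a * u k + b * w k.

Definition pairs_lt (n : nat) : list (nat * nat) :=
  flat_map (fun i => map (fun j => (i, j)) (seq (S i) (n - S i))) (seq 0 n).

Definition pairs_neq (n : nat) : list (nat * nat) :=
  flat_map (fun i => map (fun j => (i, j))
                         (filter (fun j => negb (Nat.eqb i j)) (seq 0 n)))
           (seq 0 n).

Definition braid (n : nat) : arrangement :=
  map (fun p => mkH (vlin 1 (e (fst p)) (-1) (e (snd p))) 0) (pairs_lt n).

Definition A_arr (n : nat) (a : list nat) : arrangement :=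
  map (fun i => mkH (e i) 0) (seq 0 n)
  ++ braid n
  ++ flat_map (fun p => map (fun r => mkH (vlin 1 (e (fst p)) (- INR r) (e (snd p))) 0) a)
              (pairs_neq n).

Definition C_arr (n : nat) (a : list nat) : arrangement :=
  braid n
  ++ flat_map (fun p => map (fun r => mkH (vlin 1 (e (fst p)) (-1) (e (snd p)))
                                         (ln (INR r) / ln (INR (hd O a)))) a)
              (pairs_neq n).

(* Every hyperplane of A_n(a) passes through the origin, and its hyperplanes
   x_i = c x_j correspond to the hyperplanes x_i - x_j = log c / log a_1 of C~_n.
   Split a subset of A_n(a) into coordinate hyperplanes S and such "edges" E and
   sum over S first.  If the C~-hyperplanes of E have no common point, this sum
   vanishes: either E forces some x_k = 0, and the terms for S and S + {k}
   cancel, or E has a kernel vector with positive coordinates, whose logarithm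
   would be a common point.  If they meet at x, rescaling the i-th coordinate
   by a_1^(x_i) turns every x_i = c x_j of E into x_i = x_j without changing
   any rank, and for such graphic families the sum over S equals
   (t - 1)^(n - rank E), the term of E in chi_C(t - 1). *)

From Stdlib Require Import Reals List Arith Lra Lia Classical ClassicalEpsilon.
Import ListNotations.
Open Scope R_scope.

Definition dot (n : nat) (v x : vec) : R := sumn_R n (fun i => v i * x i).

Definition in_ker (n : nat) (vs : list vec) (x : vec) : Prop :=
  forall v, In v vs -> dot n v x = 0.

(* The span of [vs] is described as the annihilator of its kernel;
   [Rank.in_span_submx] identifies it with the row space. *)
Definition in_span (n : nat) (v : vec) (vs : list vec) : Prop :=
  forall x, in_ker n vs x -> dot n v x = 0.

Definition diff (i j : nat) : vec := vlin 1 (e i) (-1) (e j).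

Lemma dot_e n k x : dot n (e k) x = if Nat.ltb k n then x k else 0.
Proof.
  unfold dot. induction n as [|m IH]; [reflexivity|]. simpl. rewrite IH. unfold e.
  destruct (Nat.eqb_spec m k), (Nat.ltb_spec k m), (Nat.ltb_spec k (S m));
    subst; try lia; ring.
Qed.

Lemma dot_e_lt n k x : (k < n)%nat -> dot n (e k) x = x k.
Proof. intros Hk. rewrite dot_e. destruct (Nat.ltb_spec k n); [reflexivity|lia]. Qed.

Lemma dot_e_ge n k x : (n <= k)%nat -> dot n (e k) x = 0.
Proof. intros Hk. rewrite dot_e. destruct (Nat.ltb_spec k n); [lia|reflexivity]. Qed.

Lemma dot_0r n v : dot n v (fun _ => 0) = 0.
Proof. unfold dot. induction n; simpl; [reflexivity|]. rewrite IHn. ring. Qed.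

Lemma dot_vlin n a u b w x : dot n (vlin a u b w) x = a * dot n u x + b * dot n w x.
Proof. unfold dot, vlin. induction n; simpl; [ring|]. rewrite IHn. ring. Qed.

Lemma dot_diff n i j x :
  (i < n)%nat -> (j < n)%nat -> dot n (diff i j) x = x i - x j.
Proof. intros. unfold diff. rewrite dot_vlin, !dot_e_lt by assumption. ring. Qed.

Lemma in_subsets {A : Type} (l ws : list A) :
  In ws (subsets l) -> forall v, In v ws -> In v l.
Proof.
  revert ws. induction l as [|x l IH]; simpl; intros ws H v Hv.
  - destruct H as [<-|[]]. destruct Hv.
  - apply in_app_or in H. destruct H as [H|H].
    + apply in_map_iff in H. destruct H as [w [<- Hw]].
      destruct Hv as [Hv|Hv]; [left|right; eapply IH]; eauto.
    + right. eapply IH; eauto.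
Qed.

Lemma Forall2_nth {A B : Type} (P : A -> B -> Prop) l1 l2 d1 d2 :
  Forall2 P l1 l2 -> forall k, (k < length l1)%nat -> P (nth k l1 d1) (nth k l2 d2).
Proof.
  induction 1; simpl; intros k Hk; [lia|].
  destruct k; auto. apply IHForall2. lia.
Qed.

Lemma Forall2_map_same {A B C : Type} (P : B -> C -> Prop) (f : A -> B) (g : A -> C) l :
  (forall x, In x l -> P (f x) (g x)) -> Forall2 P (map f l) (map g l).
Proof.
  induction l as [|x l IH]; intros H; constructor; [apply H; now left|].
  apply IH. intros; apply H; now right.
Qed.

Definition scaled_by (n : nat) (p v w : vec) : Prop :=
  exists mu, mu <> 0 /\ forall i, (i < n)%nat -> v i * p i = mu * w i.

Module Rank.
From mathcomp Require Import all_boot all_order all_algebra Rstruct.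
Import GRing.Theory.
Local Open Scope ring_scope.

Section RowSpace.
Variable n : nat.

Definition row_of (v : vec) : 'rV[R]_n := \row_(i < n) v i.
Definition col_of (v : vec) : 'cV[R]_n := \col_(i < n) v i.
Definition mx_of (vs : list vec) : 'M[R]_(length vs, n) :=
  \matrix_(k < length vs, i < n) (List.nth k vs (fun _ => 0%R)) i.

Lemma sumn_R_big m f : sumn_R m f = \sum_(i < m) f i.
Proof.
  elim: m => [|m IH] /=; first by rewrite big_ord0.
  by rewrite big_ord_recr /= IH.
Qed.

Lemma fold_Rplus_seq (f : nat -> R) s m :
  fold_right Rplus 0%R (List.map f (List.seq s m)) = \sum_(s <= k < s + m) f k.
Proof.
  elim: m s => [|m IH] s /=; first by rewrite addn0 big_geq.
  by rewrite IH big_ltn ?addnS ?ltnS ?leq_addr.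
Qed.

Lemma dot_mulmx v x : dot n v x = (row_of v *m col_of x) 0 0.
Proof.
  rewrite /dot sumn_R_big !mxE. apply: eq_bigr => i _. by rewrite !mxE.
Qed.

Lemma row_mx_of (vs : list vec) (k : 'I_(length vs)) :
  row k (mx_of vs) = row_of (List.nth k vs (fun _ => 0%R)).
Proof. apply/rowP => i. by rewrite !mxE. Qed.

Lemma In_submx v vs : List.In v vs -> (row_of v <= mx_of vs)%MS.
Proof.
  move=> /(List.In_nth _ _ (fun _ => 0%R)) [k [/ltP Hk <-]].
  apply: (eq_row_sub (Ordinal Hk)). by rewrite row_mx_of.
Qed.

Lemma mx_of_subP l (m : nat) (W : 'M[R]_(m, n)) :
  (forall v, List.In v l -> (row_of v <= W)%MS) -> (mx_of l <= W)%MS.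
Proof.
  move=> H. apply/row_subP => k. rewrite row_mx_of. apply: H.
  apply: List.nth_In. by apply/ltP.
Qed.

Lemma mx_of_incl l1 l2 :
  (forall v, List.In v l1 -> List.In v l2) -> (mx_of l1 <= mx_of l2)%MS.
Proof. move=> H. apply: mx_of_subP => v Hv. apply: In_submx. exact: H. Qed.

Lemma in_ker_mulmx vs x : in_ker n vs x -> mx_of vs *m col_of x = 0.
Proof.
  move=> H. apply/matrixP => k j. rewrite ord1 !mxE.
  have := H _ (List.nth_In _ (fun _ => 0%R) (elimT ltP (ltn_ord k))).
  rewrite dot_mulmx !mxE; apply: eq_trans. apply: eq_bigr => i _. by rewrite !mxE.
Qed.

(* If [v] is outside the row space, a column of [cokermx] is a kernel vector
   of [vs] that [v] does not annihilate. *)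
Lemma in_span_submx v vs : in_span n v vs <-> (row_of v <= mx_of vs)%MS.
Proof.
  split; last first.
  { move=> /submxP [D HD] x Hx. rewrite dot_mulmx HD -mulmxA in_ker_mulmx //.
    by rewrite mulmx0 mxE. }
  move=> H. apply: contraT; rewrite submxE => Hn.
  set C := cokermx (mx_of vs).
  have [j Hj] : exists j, (row_of v *m C) 0 j != 0.
  { case: (pickP (fun j => (row_of v *m C) 0 j != 0)) => [j Hj | Hall]; first by exists j.
    case/negP: Hn. apply/eqP/matrixP => i j. rewrite ord1.
    move: (Hall j) => /= /negbFE /eqP ->. by rewrite mxE. }
  pose x (l : nat) : R := if insub l is Some i then C i j else 0.
  have Hmul w : (w *m col_of x) 0 0 = (w *m C) 0 j.
  { rewrite !mxE. apply: eq_bigr => i _. by rewrite mxE /x valK. }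
  have HK : in_ker n vs x.
  { move=> w /(List.In_nth _ _ (fun _ => 0%R)) [k [/ltP Hk <-]].
    rewrite dot_mulmx -(row_mx_of _ (Ordinal Hk)) Hmul -row_mul mulmx_coker.
    by rewrite !mxE. }
  by move: Hj; rewrite -Hmul -dot_mulmx (H x HK) eqxx.
Qed.

Lemma lin_indep_row_free vs : lin_indep n vs <-> row_free (mx_of vs).
Proof.
  split.
  - move=> H. apply: inj_row_free => u Hu. apply/rowP => k.
    pose c (k : nat) : R := if insub k is Some k' then u 0 k' else 0.
    have -> : u 0 k = c k by rewrite /c valK.
    rewrite mxE. apply: H; last by apply/ltP.
    move=> i /ltP Hi. rewrite fold_Rplus_seq add0n big_mkord.
    have := congr1 (fun M : 'M[R]_(1, n) => M 0 (Ordinal Hi)) Hu; rewrite !mxE.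
    apply: eq_trans. apply: eq_bigr => k' _. by rewrite mxE /c valK.
  - move=> Hf c Hc k /ltP Hk.
    pose u : 'rV[R]_(length vs) := \row_(k < length vs) c k.
    have Hu : u *m mx_of vs = 0 *m mx_of vs.
    { rewrite mul0mx. apply/rowP => i. rewrite !mxE.
      have := Hc i (elimT ltP (ltn_ord i)); rewrite fold_Rplus_seq add0n big_mkord.
      apply: eq_trans. apply: eq_bigr => k' _. by rewrite !mxE. }
    have := congr1 (fun M : 'M[R]_(1, length vs) => M 0 (Ordinal Hk)) (row_free_inj Hf Hu).
    by rewrite !mxE.
Qed.

Lemma rank_mx_of_cons v vs : ~~ (row_of v <= mx_of vs)%MS ->
  \rank (mx_of (v :: vs)) = (\rank (mx_of vs)).+1.
Proof.
  move=> Hn.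
  have -> : \rank (mx_of (v :: vs)) = \rank (row_of v + mx_of vs)%MS.
  { apply/eqmx_rank/andP; split.
    - apply: mx_of_subP => w /= [<-|Hw]; first exact: addsmxSl.
      apply: submx_trans (addsmxSr _ _). exact: In_submx.
    - rewrite addsmx_sub. apply/andP; split; first by apply: In_submx; left.
      apply: mx_of_incl => w Hw; by right. }
  have Hv : row_of v != 0 by apply: contra Hn => /eqP ->; exact: sub0mx.
  case: (mxrank_adds_leqif (row_of v) (mx_of vs)) => Hle _.
  rewrite rank_rV Hv /= in Hle.
  case: (mxrank_leqif_sup (addsmxSr (row_of v) (mx_of vs))) => Hge Heq.
  have Hne : \rank (mx_of vs) != \rank (row_of v + mx_of vs)%MS.
  { rewrite Heq. apply: contra Hn => H. exact: submx_trans (addsmxSl _ _) H. }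
  apply/eqP. by rewrite eqn_leq Hle /= ltn_neqAle Hne Hge.
Qed.

Lemma exists_sublist_basis vs : exists ws,
  List.In ws (subsets vs) /\ row_free (mx_of ws) /\ (mx_of vs <= mx_of ws)%MS.
Proof.
  elim: vs => [|v vs [ws [Hin [Hf Hs]]]].
  - exists nil. split; first by left. split; last by apply: mx_of_subP.
    by rewrite /row_free -leqn0 rank_leq_row.
  - have Hvs : (mx_of vs <= mx_of (v :: ws))%MS.
    { apply: submx_trans Hs _. apply: mx_of_incl => w Hw; by right. }
    case Hb: (row_of v <= mx_of ws)%MS.
    + exists ws. split; first by apply: List.in_or_app; right.
      split => //. apply: mx_of_subP => w /= [<-|Hw] //.
      apply: submx_trans Hs. exact: In_submx.
    + exists (v :: ws). split; first by apply/List.in_or_app; left; exact: List.in_map.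
      split.
      * move: Hf; rewrite /row_free (rank_mx_of_cons v ws) ?Hb // => /eqP -> //.
      * apply: mx_of_subP => w /= [<-|Hw]; first exact: (In_submx v (v :: ws) (or_introl erefl)).
        apply: submx_trans Hvs. exact: In_submx.
Qed.

Lemma rank_vecsE vs : rank_vecs n vs = \rank (mx_of vs).
Proof.
  apply/eqP. rewrite eqn_leq. apply/andP; split.
  - apply/leP. apply list_max_le. apply List.Forall_forall => x.
    move=> /List.in_map_iff [ws [<- /List.filter_In [Hin Hb]]].
    move: Hb. rewrite /lin_indep_b. case: excluded_middle_informative => // Hl _.
    apply/leP. move/lin_indep_row_free: Hl. rewrite /row_free => /eqP <-.
    apply: mxrankS. apply: mx_of_incl. exact: in_subsets.
  - have [ws [Hin [Hf Hs]]] := exists_sublist_basis vs.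
    apply: leq_trans (mxrankS Hs) _. have := Hf; rewrite /row_free => /eqP ->.
    apply/leP. apply: (proj1 (List.Forall_forall _ _) (proj1 (list_max_le _ _) (le_n _))).
    apply: List.in_map. apply/List.filter_In. split => //.
    rewrite /lin_indep_b. case: excluded_middle_informative => // Hn.
    exfalso; apply: Hn. exact/lin_indep_row_free.
Qed.

Lemma rank_vecs_span_le l1 l2 : (forall v, List.In v l1 -> in_span n v l2) ->
  (rank_vecs n l1 <= rank_vecs n l2)%coq_nat.
Proof.
  move=> H. rewrite !rank_vecsE. apply/leP. apply: mxrankS. apply: mx_of_subP => v Hv.
  apply/in_span_submx. exact: H.
Qed.

Lemma rank_vecs_cons_notin v vs :
  ~ in_span n v vs -> rank_vecs n (v :: vs) = S (rank_vecs n vs).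
Proof.
  move=> Hn. rewrite !rank_vecsE. apply: rank_mx_of_cons. apply/negP => H.
  apply: Hn. exact/in_span_submx.
Qed.

Lemma rank_vecs_le_dim vs : (rank_vecs n vs <= n)%coq_nat.
Proof. rewrite rank_vecsE. apply/leP. exact: rank_leq_col. Qed.

Lemma rank_vecs_full vs :
  (forall k, (k < n)%coq_nat -> List.In (e k) vs) -> rank_vecs n vs = n.
Proof.
  move=> H. rewrite rank_vecsE. apply/eqP. rewrite eqn_leq rank_leq_col /=.
  rewrite -{1}(mxrank1 R n). apply: mxrankS. apply/row_subP => k.
  have -> : row k (1%:M : 'M[R]_n) = row_of (e k).
  { apply/rowP => i. rewrite !mxE /e.
    case: (Nat.eqb_spec i k) => [Hik|Hik].
    - by have -> : (k == i) = true by apply/eqP; apply: val_inj.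
    - by have -> : (k == i) = false by apply/eqP => Hki; apply: Hik; rewrite Hki. }
  apply: In_submx. apply: H. apply/ltP. exact: ltn_ord.
Qed.

(* Multiplying every coordinate by [p i <> 0] is an invertible change of coordinates. *)
Lemma rank_vecs_diag_scale (p : vec) vs ws :
  (forall i, (i < n)%coq_nat -> p i <> 0) -> Forall2 (scaled_by n p) vs ws ->
  rank_vecs n vs = rank_vecs n ws.
Proof.
  move=> Hp HF. rewrite !rank_vecsE.
  have HL : length vs = length ws := Forall2_length HF.
  pose P : 'M[R]_n := diag_mx (\row_(i < n) p i).
  have HPf : row_free P.
  { apply: inj_row_free => u Hu. apply/rowP => i.
    have := congr1 (fun M : 'M[R]_(1, n) => M 0 i) Hu. rewrite mul_mx_diag !mxE.
    move=> /eqP. rewrite mulf_eq0 => /orP [/eqP -> //|/eqP Hpi].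
    by case: (Hp i); first by apply/ltP.  }
  have Hrow (k : 'I_(length vs)) (k' : 'I_(length ws)) : k = k' :> nat ->
    exists2 mu, mu != 0 & row k (mx_of vs *m P) = mu *: row k' (mx_of ws).
  { move=> Hkk'.
    have [mu [Hmu Hvw]] := Forall2_nth _ _ _ (fun _ => 0) (fun _ => 0) HF k (elimT ltP (ltn_ord k)).
    exists mu; first exact/eqP.
    apply/rowP => i. rewrite mul_mx_diag !mxE -Hkk'. apply: Hvw. exact/ltP. }
  rewrite -(mxrankMfree (mx_of vs) HPf). apply/eqmx_rank/andP; split.
  - apply/row_subP => k.
    have Hk' : (k < length ws)%N by rewrite -HL ltn_ord.
    have [mu _ ->] := Hrow k (Ordinal Hk') erefl.
    apply: scalemx_sub. exact: row_sub.
  - apply/row_subP => k.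
    have Hk' : (k < length vs)%N by rewrite HL ltn_ord.
    have [mu Hmu Hk] := Hrow (Ordinal Hk') k erefl.
    rewrite -[row k _](scalerK Hmu) -Hk.
    apply: scalemx_sub. exact: row_sub.
Qed.

Lemma in_span_exchange u v W :
  in_span n u (v :: W) -> ~ in_span n u W -> in_span n v (u :: W).
Proof.
  move=> /in_span_submx Hu Hn.
  have Hn' : ~~ (row_of u <= mx_of W)%MS by apply/negP => H; apply/Hn/in_span_submx.
  have Hv : ~~ (row_of v <= mx_of W)%MS.
  { apply: contra Hn' => H. apply: (submx_trans Hu).
    apply: mx_of_subP => w /= [<-|Hw] //. exact: In_submx. }
  have Hle : (mx_of (u :: W) <= mx_of (v :: W))%MS.
  { apply: mx_of_subP => w /= [<-|Hw] //. exact: (In_submx w (v :: W) (or_intror Hw)). }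
  case: (mxrank_leqif_sup Hle) => _ Heq.
  have Hr : \rank (mx_of (u :: W)) == \rank (mx_of (v :: W)).
  { by rewrite (rank_mx_of_cons _ _ Hn') (rank_mx_of_cons _ _ Hv). }
  rewrite Heq in Hr. apply/in_span_submx.
  exact: submx_trans (In_submx v (v :: W) (or_introl erefl)) Hr.
Qed.

End RowSpace.
End Rank.

Definition Rsum {A : Type} (f : A -> R) (l : list A) : R := fold_right Rplus 0 (map f l).

Lemma Rsum_cons {A} (f : A -> R) x l : Rsum f (x :: l) = f x + Rsum f l.
Proof. reflexivity. Qed.

Lemma Rsum_app {A} (f : A -> R) l1 l2 : Rsum f (l1 ++ l2) = Rsum f l1 + Rsum f l2.
Proof. induction l1; [unfold Rsum; simpl; ring|]. simpl app. rewrite !Rsum_cons, IHl1. ring. Qed.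

Lemma Rsum_map {A B} (f : B -> R) (g : A -> B) l :
  Rsum f (map g l) = Rsum (fun x => f (g x)) l.
Proof. unfold Rsum. now rewrite map_map. Qed.

Lemma Rsum_ext {A} (f g : A -> R) l :
  (forall x, In x l -> f x = g x) -> Rsum f l = Rsum g l.
Proof.
  induction l as [|x l IH]; intros H; [reflexivity|].
  rewrite !Rsum_cons, H, IH; [reflexivity| |now left]. intros; apply H; now right.
Qed.

Lemma Rsum_add {A} (f g : A -> R) l : Rsum (fun x => f x + g x) l = Rsum f l + Rsum g l.
Proof. induction l; [unfold Rsum; simpl; ring|]. rewrite !Rsum_cons, IHl. ring. Qed.

Lemma Rsum_scal {A} (f : A -> R) c l : Rsum (fun x => c * f x) l = c * Rsum f l.
Proof. induction l; [unfold Rsum; simpl; ring|]. rewrite !Rsum_cons, IHl. ring. Qed.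

Lemma Rsum_opp {A} (f : A -> R) l : Rsum (fun x => - f x) l = - Rsum f l.
Proof. induction l; [unfold Rsum; simpl; ring|]. rewrite !Rsum_cons, IHl. ring. Qed.

Lemma Rsum_0 {A} (l : list A) : Rsum (fun _ => 0) l = 0.
Proof. induction l; [reflexivity|]. rewrite Rsum_cons, IHl. ring. Qed.

Lemma Rsum_comm {A B} (F : A -> B -> R) l1 l2 :
  Rsum (fun x => Rsum (F x) l2) l1 = Rsum (fun y => Rsum (fun x => F x y) l1) l2.
Proof.
  induction l1 as [|x l1 IH]; [symmetry; apply Rsum_0|].
  rewrite Rsum_cons, IH, <- Rsum_add. apply Rsum_ext. intros. now rewrite Rsum_cons.
Qed.

Lemma Rsum_filter {A} (F : A -> R) P l :
  fold_right Rplus 0 (map F (filter P l)) = Rsum (fun x => if P x then F x else 0) l.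
Proof.
  induction l as [|x l IH]; [reflexivity|].
  rewrite Rsum_cons. simpl. destruct (P x); simpl; rewrite IH; ring.
Qed.

Lemma subsets_map {A B} (f : A -> B) l : subsets (map f l) = map (map f) (subsets l).
Proof. induction l; simpl; [reflexivity|]. now rewrite IHl, map_app, !map_map. Qed.

Lemma Rsum_subsets_app {A} (F : list A -> R) l1 l2 :
  Rsum F (subsets (l1 ++ l2)) =
  Rsum (fun B1 => Rsum (fun B2 => F (B1 ++ B2)) (subsets l2)) (subsets l1).
Proof.
  revert F. induction l1; intros F.
  - cbn. now rewrite Rplus_0_r.
  - simpl. now rewrite !Rsum_app, !Rsum_map, !IHl1.
Qed.

Lemma in_span_In n v vs : In v vs -> in_span n v vs.
Proof. intros H x Hx. now apply Hx. Qed.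

Lemma in_span_trans n v l1 l2 :
  (forall w, In w l1 -> in_span n w l2) -> in_span n v l1 -> in_span n v l2.
Proof. intros H Hv x Hx. apply Hv. intros w Hw. now apply H. Qed.

Lemma in_span_e_ge n k vs : (n <= k)%nat -> in_span n (e k) vs.
Proof. intros H x _. now apply dot_e_ge. Qed.

Lemma rank_vecs_span_eq n l1 l2 :
  (forall v, In v l1 -> in_span n v l2) -> (forall v, In v l2 -> in_span n v l1) ->
  rank_vecs n l1 = rank_vecs n l2.
Proof. intros. apply Nat.le_antisymm; now apply Rank.rank_vecs_span_le. Qed.

Lemma rank_vecs_incl_eq n l1 l2 :
  incl l1 l2 -> incl l2 l1 -> rank_vecs n l1 = rank_vecs n l2.
Proof.
  intros H1 H2. apply rank_vecs_span_eq; intros v Hv; apply in_span_In; auto.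
Qed.

Lemma in_span_app_mono n X D D' :
  (forall v, In v D -> in_span n v D') -> forall v, In v (X ++ D) -> in_span n v (X ++ D').
Proof.
  intros H v Hv. apply in_app_or in Hv as [Hv|Hv].
  - apply in_span_In, in_or_app; auto.
  - eapply in_span_trans; [|now apply H]. intros w Hw. apply in_span_In, in_or_app; auto.
Qed.

Lemma not_in_span_witness n v D : ~ in_span n v D -> exists x, in_ker n D x /\ dot n v x <> 0.
Proof.
  intros H. apply not_all_ex_not in H as [x Hx]. exists x. now apply imply_to_and in Hx.
Qed.

Lemma not_in_span_e_lt n k D : ~ in_span n (e k) D -> (k < n)%nat.
Proof. intros H. destruct (Nat.lt_ge_cases k n) as [|Hk]; auto. now contradict H; apply in_span_e_ge. Qed.

Lemma in_ker_diff n D x i j :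
  in_ker n D x -> In (diff i j) D -> (i < n)%nat -> (j < n)%nat -> x i = x j.
Proof. intros H Hin Hi Hj. specialize (H _ Hin). rewrite dot_diff in H by auto. lra. Qed.

Lemma in_ker_e n D x w : in_ker n D x -> In (e w) D -> (w < n)%nat -> x w = 0.
Proof. intros H Hin Hw. specialize (H _ Hin). now rewrite dot_e_lt in H. Qed.

Section CoordinateSum.
Variables (n : nat) (t : R).

(* The part of the characteristic polynomial contributed by the subsets
   [map e S ++ D], with [S] running over the coordinate hyperplanes [U]. *)
Definition coord_sum (U : list nat) (D : list vec) : R :=
  Rsum (fun S => (-1) ^ length S * t ^ (n - rank_vecs n (map e S ++ D))) (subsets U).

Lemma coord_sum_nil D : coord_sum [] D = t ^ (n - rank_vecs n D).
Proof. unfold coord_sum, Rsum. simpl. ring. Qed.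

Lemma coord_sum_cons u U D : coord_sum (u :: U) D = coord_sum U D - coord_sum U (e u :: D).
Proof.
  unfold coord_sum, Rminus. simpl subsets. rewrite Rsum_app, Rsum_map, <- Rsum_opp, Rplus_comm.
  f_equal. apply Rsum_ext. intros S _.
  rewrite (rank_vecs_incl_eq n (map e (u :: S) ++ D) (map e S ++ e u :: D)).
  - simpl. ring.
  - intros v. simpl. rewrite !in_app_iff. simpl. tauto.
  - intros v. simpl. rewrite !in_app_iff. simpl. tauto.
Qed.

Lemma coord_sum_span_eq U D D' :
  (forall v, In v D -> in_span n v D') -> (forall v, In v D' -> in_span n v D) ->
  coord_sum U D = coord_sum U D'.
Proof.
  intros H1 H2. unfold coord_sum. apply Rsum_ext. intros S _. do 3 f_equal.
  apply rank_vecs_span_eq; now apply in_span_app_mono.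
Qed.

Lemma coord_sum_absorb U v D : in_span n v D -> coord_sum U (v :: D) = coord_sum U D.
Proof.
  intros Hv. apply coord_sum_span_eq.
  - intros w [<-|Hw]; auto using in_span_In.
  - intros w Hw. apply in_span_In. now right.
Qed.

(* Adding [k] to [S] does not change the rank, so the terms cancel in pairs. *)
Lemma coord_sum_vanish k U D : In k U -> in_span n (e k) D -> coord_sum U D = 0.
Proof.
  revert D. induction U as [|u U IH]; intros D Hk HD; [destruct Hk|].
  rewrite coord_sum_cons. destruct (classic (in_span n (e u) D)) as [Hu|Hu].
  - rewrite coord_sum_absorb by auto. ring.
  - destruct Hk as [->|Hk]; [contradiction|].
    rewrite (IH D), (IH (e u :: D)); auto; [ring|].
    eapply in_span_trans; [|apply HD]. intros w Hw. apply in_span_In. now right.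
Qed.

Definition graphic (D : list vec) : Prop :=
  forall v, In v D -> (exists i j, (i < n)%nat /\ (j < n)%nat /\ v = diff i j) \/
                      (exists w, (w < n)%nat /\ v = e w).

Lemma in_ker_graphic D z : graphic D ->
  (forall i j, (i < n)%nat -> (j < n)%nat -> In (diff i j) D -> z i = z j) ->
  (forall w, (w < n)%nat -> In (e w) D -> z w = 0) -> in_ker n D z.
Proof.
  intros HG Hd He v Hv. destruct (HG v Hv) as [[i [j [Hi [Hj ->]]]]|[w [Hw ->]]].
  - rewrite dot_diff, (Hd i j) by auto. ring.
  - rewrite dot_e_lt by auto. auto.
Qed.

(* For graphic [D], the indicator of a level set of a kernel vector is constant
   along the edges [diff i j] of [D]; products of such indicators stay in the kernel. *)
Lemma graphic_separating_vector k U D : graphic D -> ~ in_span n (e k) D ->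
  (forall u, In u U -> ~ in_span n (e u) (e k :: D)) ->
  exists z, in_ker n D z /\ z k = 1 /\ (forall u, In u U -> (u < n)%nat -> z u = 0).
Proof.
  intros HG Hk HU.
  assert (Hkn := not_in_span_e_lt _ _ _ Hk).
  destruct (not_in_span_witness _ _ _ Hk) as [y [Hy Hyk]]. rewrite dot_e_lt in Hyk by auto.
  enough (exists z, (forall i j, (i < n)%nat -> (j < n)%nat -> In (diff i j) D -> z i = z j) /\
                    (forall w, (w < n)%nat -> In (e w) D -> z w = 0) /\ z k = 1 /\
                    (forall u, In u U -> (u < n)%nat -> z u = 0)) as [z [Hd [He Hz]]]
    by (exists z; split; [now apply in_ker_graphic|auto]).
  induction U as [|u U IH].
  - exists (fun i => if Req_EM_T (y i) (y k) then 1 else 0). repeat split.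
    + intros i j Hi Hj Hd. now rewrite (in_ker_diff n D y i j).
    + intros w Hw Hin. rewrite (in_ker_e n D y w) by auto.
      destruct (Req_EM_T 0 (y k)); [lra|auto].
    + destruct (Req_EM_T (y k) (y k)); [auto|lra].
    + intros _ [].
  - destruct IH as [z [H1 [H2 [H3 H4]]]]; [intros; apply HU; now right|].
    assert (Hu : ~ in_span n (e u) (e k :: D)) by (apply HU; now left).
    assert (Hun := not_in_span_e_lt _ _ _ Hu).
    destruct (not_in_span_witness _ _ _ Hu) as [x [Hx Hxu]].
    rewrite dot_e_lt in Hxu by auto.
    assert (Hxk : x k = 0) by (apply (in_ker_e n (e k :: D) x k); simpl; auto).
    assert (HxD : in_ker n D x) by (intros v Hv; apply Hx; now right).
    exists (fun i => z i * (if Req_EM_T (x i) 0 then 1 else 0)). repeat split.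
    + intros i j Hi Hj Hd. now rewrite (H1 i j), (in_ker_diff n D x i j).
    + intros w Hw Hin. rewrite H2 by auto. ring.
    + rewrite H3, Hxk. destruct (Req_EM_T 0 0); [ring|lra].
    + intros v [<-|Hv] Hvn.
      * destruct (Req_EM_T (x u) 0); [contradiction|ring].
      * rewrite H4 by auto. ring.
Qed.

Lemma not_in_span_e_graphic k U D : graphic D -> ~ in_span n (e k) D ->
  (forall u, In u U -> ~ in_span n (e u) (e k :: D)) -> ~ in_span n (e k) (map e U ++ D).
Proof.
  intros HG Hk HU Hsp. assert (Hkn := not_in_span_e_lt _ _ _ Hk).
  destruct (graphic_separating_vector k U D HG Hk HU) as [z [Hz [Hzk HzU]]].
  enough (dot n (e k) z = 0) by (rewrite dot_e_lt in H by auto; lra).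
  apply Hsp. intros v Hv. apply in_app_or in Hv as [Hv|Hv]; [|now apply Hz].
  apply in_map_iff in Hv as [u [<- Hu]]. rewrite dot_e.
  destruct (Nat.ltb_spec u n); auto.
Qed.

Lemma rank_vecs_app_cons v X D : rank_vecs n (X ++ v :: D) = rank_vecs n (v :: X ++ D).
Proof.
  apply rank_vecs_incl_eq; intros w; simpl; rewrite !in_app_iff; simpl; tauto.
Qed.

Lemma coord_sum_graphic U D : graphic D -> (forall u, In u U -> ~ in_span n (e u) D) ->
  coord_sum U D = t ^ (n - rank_vecs n (map e U ++ D)) *
                  (t - 1) ^ (rank_vecs n (map e U ++ D) - rank_vecs n D).
Proof.
  revert D. induction U as [|k U IH]; intros D HG HU.
  { rewrite coord_sum_nil, Nat.sub_diag. simpl. ring. }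
  assert (Hk : ~ in_span n (e k) D) by (apply HU; now left).
  assert (HU' : forall u, In u U -> ~ in_span n (e u) D) by (intros; apply HU; now right).
  rewrite coord_sum_cons, (IH D HG HU').
  change (map e (k :: U) ++ D) with (e k :: (map e U ++ D)).
  set (R0 := rank_vecs n D). set (R1 := rank_vecs n (map e U ++ D)).
  assert (H01 : (R0 <= R1)%nat).
  { apply Rank.rank_vecs_span_le. intros v Hv. apply in_span_In, in_or_app; auto. }
  (* Either some [e u] enters the span once [e k] is added (then, by exchange,
     [e k] adds nothing to [map e U ++ D]), or [e k] raises every rank by one. *)
  destruct (classic (exists u, In u U /\ in_span n (e u) (e k :: D)))
    as [[u [Hu Hsp]]|Hno].
  - assert (Hin : in_span n (e k) (map e U ++ D)).
    { eapply in_span_trans; [|apply (Rank.in_span_exchange n (e u) (e k) D Hsp); auto].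
      intros w [<-|Hw]; apply in_span_In, in_or_app; [left; now apply in_map|now right]. }
    rewrite (coord_sum_vanish u U (e k :: D)), rank_vecs_span_eq with (l2 := map e U ++ D);
      auto; [fold R1; ring| |].
    + intros v [<-|Hv]; auto using in_span_In.
    + intros v Hv; apply in_span_In; now right.
  - assert (HU2 : forall u, In u U -> ~ in_span n (e u) (e k :: D))
      by (intros u Hu Hs; apply Hno; now exists u).
    assert (HG2 : graphic (e k :: D))
      by (intros v [<-|Hv]; [right; exists k; eauto using not_in_span_e_lt|auto]).
    assert (HR : ~ in_span n (e k) (map e U ++ D)) by now apply not_in_span_e_graphic.
    assert (Hle := Rank.rank_vecs_le_dim n (e k :: map e U ++ D)).
    rewrite (IH (e k :: D) HG2 HU2), rank_vecs_app_cons,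
      !Rank.rank_vecs_cons_notin in * by auto. fold R0 R1 in Hle |- *.
    replace (n - R1)%nat with (S (n - S R1)) by lia.
    replace (S R1 - R0)%nat with (S (R1 - R0)) by lia.
    replace (S R1 - S R0)%nat with (R1 - R0)%nat by lia.
    simpl. ring.
Qed.

End CoordinateSum.

(* An edge [(i, j, c)] stands both for the hyperplane [x_i = c x_j] of [A_n(a)]
   and for the hyperplane [x_i - x_j = log c / log a_1] of [C~_n]. *)
Definition edge := (nat * nat * R)%type.

Definition edge_nrm_A (ed : edge) : vec := let '(i, j, c) := ed in vlin 1 (e i) (- c) (e j).
Definition edge_nrm_C (ed : edge) : vec := let '(i, j, _) := ed in diff i j.
Definition edge_hyp_A (ed : edge) : hyperplane := mkH (edge_nrm_A ed) 0.
Definition edge_hyp_C (a1 : R) (ed : edge) : hyperplane :=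
  let '(i, j, c) := ed in mkH (diff i j) (ln c / ln a1).

Definition edge_ok (n : nat) (ed : edge) : Prop :=
  let '(i, j, c) := ed in (i < n)%nat /\ (j < n)%nat /\ 0 < c.

Section Edges.
Variables (n : nat) (E : list edge).
Hypothesis HE : forall ed, In ed E -> edge_ok n ed.

Lemma in_ker_edges x :
  in_ker n (map edge_nrm_A E) x <-> (forall i j c, In (i, j, c) E -> x i = c * x j).
Proof.
  split.
  - intros H i j c Hin. destruct (HE _ Hin) as [Hi [Hj Hc]].
    specialize (H _ (in_map _ _ _ Hin)). simpl in H.
    rewrite dot_vlin, !dot_e_lt in H by auto. lra.
  - intros H v Hv. apply in_map_iff in Hv as [[[i j] c] [<- Hin]].
    destruct (HE _ Hin) as [Hi [Hj Hc]]. simpl.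
    rewrite dot_vlin, !dot_e_lt, (H i j c Hin) by auto. ring.
Qed.

(* As every [c] is positive, the kernel is closed under coordinatewise [Rabs];
   summing [Rabs] of witnesses for all coordinates gives a positive kernel vector. *)
Lemma positive_ker_vector :
  (forall k, (k < n)%nat -> ~ in_span n (e k) (map edge_nrm_A E)) ->
  exists y, in_ker n (map edge_nrm_A E) y /\ forall i, (i < n)%nat -> 0 < y i.
Proof.
  intros Hno.
  enough (Hy : forall m, (m <= n)%nat -> exists y, in_ker n (map edge_nrm_A E) y /\
            (forall i, 0 <= y i) /\ (forall i, (i < m)%nat -> 0 < y i))
    by (destruct (Hy n (le_n n)) as [y [? [_ ?]]]; eauto).
  induction m as [|m IH]; intros Hm.
  - exists (fun _ => 0). repeat split; intros; [apply in_ker_edges; intros; ring|lra|lia].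
  - destruct IH as [y [Hy1 [Hy2 Hy3]]]; [lia|].
    destruct (not_in_span_witness _ _ _ (Hno m ltac:(lia))) as [x [Hx Hxm]].
    rewrite dot_e_lt in Hxm by lia.
    exists (fun i => y i + Rabs (x i)). repeat split.
    + apply in_ker_edges. intros i j c Hin.
      destruct (HE _ Hin) as [_ [_ Hc]].
      rewrite (proj1 (in_ker_edges y) Hy1 i j c Hin), (proj1 (in_ker_edges x) Hx i j c Hin),
        Rabs_mult, (Rabs_pos_eq c) by lra. ring.
    + intros i. pose proof (Hy2 i). pose proof (Rabs_pos (x i)). lra.
    + intros i Hi. pose proof (Rabs_pos (x i)). destruct (Nat.eq_dec i m) as [->|Hne].
      * pose proof (Hy2 m). pose proof (Rabs_pos_lt _ Hxm). lra.
      * pose proof (Hy3 i ltac:(lia)). lra.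
Qed.

Variable a1 : R.
Hypothesis Ha1 : ln a1 <> 0.

Lemma on_edge_hyp_C i j c x : (i < n)%nat -> (j < n)%nat ->
  on_hyp n (edge_hyp_C a1 (i, j, c)) x <-> x i - x j = ln c / ln a1.
Proof.
  intros Hi Hj. unfold on_hyp. simpl. fold (dot n (diff i j) x). now rewrite dot_diff.
Qed.

(* [x |-> log_{a_1} x] maps a positive kernel vector to a common point. *)
Lemma coord_sum_edges_noncentral t :
  ~ central_in n (map (edge_hyp_C a1) E) -> coord_sum n t (seq 0 n) (map edge_nrm_A E) = 0.
Proof.
  intros Hnc.
  destruct (classic (exists k, (k < n)%nat /\ in_span n (e k) (map edge_nrm_A E)))
    as [[k [Hk Hs]]|Hno].
  { apply (coord_sum_vanish n t k); auto. apply in_seq. lia. }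
  destruct positive_ker_vector as [y [Hy Hpos]]; [eauto|].
  contradict Hnc. exists (fun i => ln (y i) / ln a1). intros h Hh.
  apply in_map_iff in Hh as [[[i j] c] [<- Hin]]. destruct (HE _ Hin) as [Hi [Hj Hc]].
  apply on_edge_hyp_C; auto.
  rewrite (proj1 (in_ker_edges y) Hy i j c Hin), ln_mult by auto. field. auto.
Qed.

(* At a common point [x], the coordinate change [p_i = a_1 ^ x_i] turns each
   [x_i = c x_j] into a multiple of [x_i = x_j] and fixes the coordinate normals. *)
Lemma coord_sum_edges_rescale t U :
  central_in n (map (edge_hyp_C a1) E) ->
  coord_sum n t U (map edge_nrm_A E) = coord_sum n t U (map edge_nrm_C E).
Proof.
  intros [x Hx].
  set (p := fun i => exp (x i * ln a1)).
  assert (Hp0 : forall i, p i <> 0) by (intros; apply Rgt_not_eq, exp_pos).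
  assert (Hp : forall i j c, In (i, j, c) E -> p i = c * p j).
  { intros i j c Hin. destruct (HE _ Hin) as [Hi [Hj Hc]].
    assert (Hxij := proj1 (on_edge_hyp_C i j c x Hi Hj) (Hx _ (in_map _ _ _ Hin))).
    unfold p. replace (x i * ln a1) with (ln c + x j * ln a1).
    - now rewrite exp_plus, exp_ln.
    - replace (x i) with (x j + ln c / ln a1) by lra. field. auto. }
  assert (He : forall i l, e i l * p l = e i l * p i)
    by (intros i l; unfold e; destruct (Nat.eqb_spec l i); [subst|]; ring).
  unfold coord_sum. apply Rsum_ext. intros S _. do 3 f_equal.
  apply (Rank.rank_vecs_diag_scale n p); auto. apply Forall2_app.
  - apply Forall2_map_same. intros s _. exists (p s). split; auto.
    intros i _. rewrite He. ring.
  - apply Forall2_map_same. intros [[i j] c] Hin. exists (p i). split; auto.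
    intros l _. simpl. unfold diff, vlin.
    rewrite Rmult_plus_distr_r, !Rmult_assoc, (He i l), (He j l), (Hp i j c Hin). ring.
Qed.

Lemma coord_sum_edges_central t :
  central_in n (map (edge_hyp_C a1) E) ->
  coord_sum n t (seq 0 n) (map edge_nrm_A E) = (t - 1) ^ (n - rank_vecs n (map edge_nrm_C E)).
Proof.
  intros Hc. rewrite coord_sum_edges_rescale by auto. rewrite coord_sum_graphic.
  - rewrite (Rank.rank_vecs_full n), Nat.sub_diag; [simpl; ring|].
    intros k Hk. apply in_or_app. left. apply in_map, in_seq. lia.
  - intros v Hv. apply in_map_iff in Hv as [[[i j] c] [<- Hin]].
    destruct (HE _ Hin) as [Hi [Hj _]]. left. now exists i, j.
  - intros u Hu Hs. apply in_seq in Hu.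
    enough (Hdot : dot n (e u) (fun _ => 1) = 0) by (rewrite dot_e_lt in Hdot by lia; lra).
    apply Hs. intros v Hv. apply in_map_iff in Hv as [[[i j] c] [<- Hin]].
    destruct (HE _ Hin) as [Hi [Hj _]]. simpl. rewrite dot_diff by auto. ring.
Qed.

End Edges.

Definition edges (n : nat) (a : list nat) : list edge :=
  map (fun p => (fst p, snd p, 1)) (pairs_lt n) ++
  flat_map (fun p => map (fun r => (fst p, snd p, INR r)) a) (pairs_neq n).

Lemma A_arr_edges n a :
  A_arr n a = map (fun i => mkH (e i) 0) (seq 0 n) ++ map edge_hyp_A (edges n a).
Proof.
  unfold A_arr, edges, braid. rewrite map_app, !map_map, !flat_map_concat_map, concat_map,
    map_map. do 3 f_equal. apply map_ext. intros [i j]. now rewrite map_map.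
Qed.

Lemma C_arr_edges n a : C_arr n a = map (edge_hyp_C (INR (hd O a))) (edges n a).
Proof.
  unfold C_arr, edges, braid. rewrite map_app, !map_map, !flat_map_concat_map, concat_map,
    map_map. f_equal; [|f_equal]; apply map_ext; intros [i j].
  - simpl. now rewrite ln_1, Rdiv_0_l.
  - now rewrite map_map.
Qed.

Lemma edges_ok n a :
  Forall (fun r => (2 <= r)%nat) a -> forall ed, In ed (edges n a) -> edge_ok n ed.
Proof.
  intros Ha ed Hed. unfold edges, pairs_lt, pairs_neq in Hed.
  apply in_app_or in Hed as [H|H].
  - apply in_map_iff in H as [[i j] [<- Hp]]. apply in_flat_map in Hp as [i' [Hi' Hp]].
    apply in_map_iff in Hp as [j' [[= <- <-] Hj']]. apply in_seq in Hi', Hj'.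
    simpl. repeat split; try lia. lra.
  - apply in_flat_map in H as [[i j] [Hp H]]. apply in_map_iff in H as [r [<- Hr]].
    apply in_flat_map in Hp as [i' [Hi' Hp]]. apply in_map_iff in Hp as [j' [[= <- <-] Hj']].
    apply filter_In in Hj' as [Hj' _]. apply in_seq in Hi', Hj'.
    simpl. repeat split; try lia. apply lt_0_INR.
    rewrite Forall_forall in Ha. specialize (Ha r Hr). lia.
Qed.

(* [A_n(a)] is central, and a subset splits into coordinate hyperplanes and edges. *)
Lemma charpoly_A_arr n a t :
  charpoly n (A_arr n a) t =
  Rsum (fun E => (-1) ^ length E * coord_sum n t (seq 0 n) (map edge_nrm_A E))
       (subsets (edges n a)).
Proof.
  unfold charpoly. rewrite Rsum_filter.
  rewrite A_arr_edges, Rsum_subsets_app, Rsum_comm, !subsets_map, !Rsum_map.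
  apply Rsum_ext. intros E _. unfold coord_sum. rewrite Rsum_map, <- Rsum_scal.
  apply Rsum_ext. intros S _. unfold central_b.
  destruct excluded_middle_informative as [_|Hnc].
  - unfold rank_hyps. rewrite length_app, !length_map, pow_add, map_app, !map_map. simpl.
    rewrite (Rmult_comm ((-1) ^ length S)), Rmult_assoc. reflexivity.
  - exfalso. apply Hnc. exists (fun _ => 0). intros h Hh. unfold on_hyp.
    fold (dot n (nrm h) (fun _ => 0)). rewrite dot_0r.
    apply in_app_or in Hh as [Hh|Hh]; apply in_map_iff in Hh as [? [<- _]]; reflexivity.
Qed.

Lemma charpoly_C_arr n a s :
  charpoly n (C_arr n a) s =
  Rsum (fun E => if central_b n (map (edge_hyp_C (INR (hd O a))) E)
                 then (-1) ^ length E * s ^ (n - rank_vecs n (map edge_nrm_C E)) else 0)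
       (subsets (edges n a)).
Proof.
  unfold charpoly. rewrite Rsum_filter, C_arr_edges, subsets_map, Rsum_map.
  apply Rsum_ext. intros E _. unfold rank_hyps. rewrite length_map, map_map.
  replace (map (fun ed => nrm (edge_hyp_C _ ed)) E) with (map edge_nrm_C E);
    [reflexivity|].
  apply map_ext. now intros [[i j] c].
Qed.

Lemma ln_INR_neq_0 r : (2 <= r)%nat -> ln (INR r) <> 0.
Proof.
  intros Hr. apply Rgt_not_eq. rewrite <- ln_1. apply ln_increasing; [lra|].
  apply (lt_INR 1). lia.
Qed.

Theorem theorem4p1 (a : list nat) (n : nat)
  (Ha_ne : a <> [])
  (Ha_nodup : NoDup a)
  (Ha_ge2 : Forall (fun r => (2 <= r)%nat) a) :
  forall t : R, charpoly n (A_arr n a) t = charpoly n (C_arr n a) (t - 1).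
Proof.
  intros t. rewrite charpoly_A_arr, charpoly_C_arr.
  assert (Ha1 : ln (INR (hd O a)) <> 0).
  { destruct a as [|r a']; [contradiction|]. inversion Ha_ge2. now apply ln_INR_neq_0. }
  apply Rsum_ext. intros E HE.
  assert (HEok : forall ed, In ed E -> edge_ok n ed)
    by (intros; eapply edges_ok, in_subsets; eauto).
  unfold central_b. destruct excluded_middle_informative as [Hc|Hnc].
  - now rewrite (coord_sum_edges_central n E HEok _ Ha1).
  - rewrite (coord_sum_edges_noncentral n E HEok _ Ha1) by auto. ring.
Qed.
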